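(* Let $0<p_0<1$, $0<\beta\le1$, $0\le\alpha\le1$ with $\alpha\le\beta$, $\epsilon>0$, $\omega\ge0$, $\gamma_0\ge\gamma\ge0$. Let $\omega(t),\epsilon_x(t),\epsilon_y(t),\delta\gamma_t$ be real-valued functions of time with $|\omega(t)|\le\omega$, $\sqrt{\epsilon_x^2(t)+\epsilon_y^2(t)}\le\epsilon$, $|\delta\gamma_t|\le\gamma$, and set $H(t)=[1+\omega(t)]I_z+\epsilon_x(t)I_x+\epsilon_y(t)I_y$, $\gamma_t=\gamma_0+\delta\gamma_t$. Let the qubit density matrix $\rho_t$ evolve according to $$\dot\rho_t=-i[H(t),\rho_t]+\gamma_t\Big(\sigma_-\rho_t\sigma_+-\tfrac12\sigma_+\sigma_-\rho_t-\tfrac12\rho_t\sigma_+\sigma_-\Big)$$ from an initial state $\rho_0$ with $\langle1|\rho_0|1\rangle\le\alpha p_0$. Let $$T_a=\frac{2p_0}{\sqrt{4\epsilon^2+(\gamma_0+\gamma)^2}+(\gamma_0+\gamma)}.$$ Then for every $t\in[0,(1-\beta)T_a]$, $\rho_t\in\mathcal{D}_a=\{\rho:\langle0|\rho|0\rangle\ge1-p_0\}$; equivalently, a projective measurement of $\sigma_z$ at time $t$ has probability of failure $p=\langle1|\rho_t|1\rangle\le p_0$.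
   Context: $\sigma_x,\sigma_y,\sigma_z$ are the Pauli matrices $\begin{pmatrix}0&1\\1&0\end{pmatrix},\begin{pmatrix}0&-i\\i&0\end{pmatrix},\begin{pmatrix}1&0\\0&-1\end{pmatrix}$, $I_j=\frac12\sigma_j$, $\sigma_-=\frac12(\sigma_x-i\sigma_y)$, $\sigma_+=\frac12(\sigma_x+i\sigma_y)$, $[A,B]=AB-BA$. $|0\rangle=(1,0)^T$, $|1\rangle=(0,1)^T$ are the eigenvectors of $\sigma_z$ with eigenvalues $1,-1$. Units with $\hbar=1$. The probability of failure is the probability that a $\sigma_z$ measurement yields $|1\rangle$. *)

From HB Require Import structures.
From mathcomp Require Import all_boot all_order all_algebra.
From mathcomp.real_closed Require Import complex.
From mathcomp Require Import all_classical all_reals topology normedtype derive.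
Set Implicit Arguments.
Unset Strict Implicit.
Unset Printing Implicit Defensive.
Import Order.TTheory GRing.Theory Num.Theory.
Import numFieldNormedType.Exports.
Local Open Scope ring_scope.
Local Open Scope classical_set_scope.

Section QubitDefs.
Variable R : realType.
Local Notation C := (complex R).

Definition rc (x : R) : C := Complex x 0.
Definition iC : C := Complex 0 1.

Definition sigma_x : 'M[C]_2 :=
  \matrix_(i < 2, j < 2) (if i == j then 0 else 1).
Definition sigma_y : 'M[C]_2 :=
  \matrix_(i < 2, j < 2)
    (if i == j then 0 else if (i == 0 :> nat) then - iC else iC).
Definition sigma_z : 'M[C]_2 :=
  \matrix_(i < 2, j < 2)
    (if i == j then (if (i == 0 :> nat) then 1 else -1) else 0).

Definition I_x : 'M[C]_2 := rc (1/2) *: sigma_x.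
Definition I_y : 'M[C]_2 := rc (1/2) *: sigma_y.
Definition I_z : 'M[C]_2 := rc (1/2) *: sigma_z.
Definition sigma_m : 'M[C]_2 := rc (1/2) *: (sigma_x - iC *: sigma_y).
Definition sigma_p : 'M[C]_2 := rc (1/2) *: (sigma_x + iC *: sigma_y).

Definition comm (A B : 'M[C]_2) : 'M[C]_2 := A *m B - B *m A.

Definition ket0 : 'cV[C]_2 := \col_(i < 2) (if (i == 0 :> nat) then 1 else 0).
Definition ket1 : 'cV[C]_2 := \col_(i < 2) (if (i == 0 :> nat) then 0 else 1).

Definition adj {m n} (A : 'M[C]_(m, n)) : 'M[C]_(n, m) := (map_mx conjc A)^T.

Definition mel (v : 'cV[C]_2) (A : 'M[C]_2) (w : 'cV[C]_2) : C :=
  (adj v *m A *m w) 0 0.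

Definition density_matrix (rho : 'M[C]_2) : Prop :=
  adj rho = rho /\ (forall v : 'cV[C]_2, 0 <= mel v rho v) /\ \tr rho = 1.

Definition Ham (om ex ey : R -> R) (t : R) : 'M[C]_2 :=
  rc (1 + om t) *: I_z + rc (ex t) *: I_x + rc (ey t) *: I_y.

Definition lindblad_rhs (H : 'M[C]_2) (g : R) (rho : 'M[C]_2) : 'M[C]_2 :=
  - iC *: comm H rho
  + rc g *: (sigma_m *m rho *m sigma_p
             - rc (1/2) *: (sigma_p *m sigma_m *m rho)
             - rc (1/2) *: (rho *m sigma_p *m sigma_m)).

Definition mx_has_deriv (f : R -> 'M[C]_2) (t : R) (D : 'M[C]_2) : Prop :=
  forall i j : 'I_2,
    is_derive t (1 : R) (fun s => complex.Re (f s i j)) (complex.Re (D i j)) /\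
    is_derive t (1 : R) (fun s => complex.Im (f s i j)) (complex.Im (D i j)).

Definition mx_right_cont0 (f : R -> 'M[C]_2) : Prop :=
  forall i j : 'I_2,
    (fun s => complex.Re (f s i j)) @ 0^'+ --> complex.Re (f 0 i j) /\
    (fun s => complex.Im (f s i j)) @ 0^'+ --> complex.Im (f 0 i j).

Definition T_a (p0 eps gamma0 gamma : R) : R :=
  2 * p0 / (Num.sqrt (4 * eps ^+ 2 + (gamma0 + gamma) ^+ 2) + (gamma0 + gamma)).

Definition in_Da (p0 : R) (rho : 'M[C]_2) : Prop :=
  rc (1 - p0) <= mel ket0 rho ket0.

Definition fail_prob (rho : 'M[C]_2) : C := mel ket1 rho ket1.

End QubitDefs.

Arguments iC {R}.
Arguments sigma_x {R}. Arguments sigma_y {R}. Arguments sigma_z {R}.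
Arguments I_x {R}. Arguments I_y {R}. Arguments I_z {R}.
Arguments sigma_m {R}. Arguments sigma_p {R}.
Arguments ket0 {R}. Arguments ket1 {R}.

(* Along the master equation the trace of rho_t is conserved, and the
   Hermiticity defect V = |rho_10 - conj rho_01|^2 + 4 (Im rho_11)^2 satisfies
   V' = -gamma_t (|rho_10 - conj rho_01|^2 + 8 (Im rho_11)^2) <= 0, so rho_t stays
   Hermitian.  The determinant P = rho_00 rho_11 - |rho_01|^2 then obeys
   P' = gamma_t (rho_00^2 - P), so P cannot become negative: rho_t stays positive.
   Finally d/dt rho_11 = eps_x Im rho_01 + eps_y Re rho_01 + gamma_t rho_00, and under
   |rho_01|^2 <= rho_00 rho_11, rho_00 + rho_11 = 1 this rate is at most
   r = (sqrt (4 eps^2 + (gamma0 + gamma)^2) + gamma0 + gamma) / 2.  Since r T_a = p0,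
   rho_11(t) <= alpha p0 + (1 - beta) p0 <= p0. *)

From HB Require Import structures.
From mathcomp Require Import all_boot all_order all_algebra.
From mathcomp.real_closed Require Import complex.
From mathcomp Require Import all_classical all_reals topology normedtype derive realfun.
From mathcomp.algebra_tactics Require Import ring lra.
Import Order.TTheory GRing.Theory Num.Theory.
Import numFieldNormedType.Exports.
Local Open Scope ring_scope.
Local Open Scope classical_set_scope.

Section ComplexParts.
Context {R : rcfType}.
Implicit Types x y : complex R.

Lemma complex_ext x y : complex.Re x = complex.Re y -> complex.Im x = complex.Im y -> x = y.
Proof. by case: x; case: y => ? ? ? ? /= -> ->. Qed.

Lemma Re_add x y : complex.Re (x + y) = complex.Re x + complex.Re y.
Proof. by case: x; case: y. Qed.
Lemma Im_add x y : complex.Im (x + y) = complex.Im x + complex.Im y.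
Proof. by case: x; case: y. Qed.
Lemma Re_conj x : complex.Re x^*%C = complex.Re x. Proof. by case: x. Qed.
Lemma Im_conj x : complex.Im x^*%C = - complex.Im x. Proof. by case: x. Qed.

End ComplexParts.

Section Matrix2.
Context {T : pzRingType}.

(* The private key stops unification from unfolding [mx2] into a [\matrix_]
   term, which makes rewriting with [mulmx2] diverge. *)
Fact mx2_key : unit. Proof. by []. Qed.
Definition mx2 (a b c d : T) : 'M[T]_2 :=
  \matrix[mx2_key]_(i, j)
    if i == 0 :> nat then (if j == 0 :> nat then a else b)
    else (if j == 0 :> nat then c else d).

Lemma ord2_ind (P : 'I_2 -> Prop) : P 0 -> P 1 -> forall i, P i.
Proof.
by move=> P0 P1 [[|[|//]] ?];
  [rewrite (_ : Ordinal _ = 0) | rewrite (_ : Ordinal _ = 1)]; try apply: val_inj.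
Qed.

Lemma mx2_eta (M : 'M[T]_2) : M = mx2 (M 0 0) (M 0 1) (M 1 0) (M 1 1).
Proof. by apply/matrixP; apply: ord2_ind; apply: ord2_ind; rewrite mxE. Qed.

Lemma mx2_ext (M N : 'M[T]_2) :
  M 0 0 = N 0 0 -> M 0 1 = N 0 1 -> M 1 0 = N 1 0 -> M 1 1 = N 1 1 -> M = N.
Proof. by move=> ? ? ? ?; apply/matrixP; apply: ord2_ind; apply: ord2_ind. Qed.

Lemma mulmx2 a b c d a' b' c' d' :
  mx2 a b c d *m mx2 a' b' c' d' =
  mx2 (a * a' + b * c') (a * b' + b * d') (c * a' + d * c') (c * b' + d * d').
Proof.
by apply/matrixP; apply: ord2_ind; apply: ord2_ind;
  rewrite !mxE !big_ord_recr big_ord0 /= !mxE add0r.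
Qed.

Lemma addmx2 a b c d a' b' c' d' :
  mx2 a b c d + mx2 a' b' c' d' = mx2 (a + a') (b + b') (c + c') (d + d').
Proof. by apply/matrixP; apply: ord2_ind; apply: ord2_ind; rewrite !mxE. Qed.

Lemma oppmx2 a b c d : - mx2 a b c d = mx2 (- a) (- b) (- c) (- d).
Proof. by apply/matrixP; apply: ord2_ind; apply: ord2_ind; rewrite !mxE. Qed.

Lemma scalemx2 k a b c d : k *: mx2 a b c d = mx2 (k * a) (k * b) (k * c) (k * d).
Proof. by apply/matrixP; apply: ord2_ind; apply: ord2_ind; rewrite !mxE. Qed.

Lemma big_ord2 (F : 'I_2 -> T) : \sum_(i < 2) F i = F 0 + F 1.
Proof. by rewrite big_ord_recl big_ord1; congr (F _ + F _); apply: val_inj. Qed.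

Lemma mxtrace2 (M : 'M[T]_2) : \tr M = M 0 0 + M 1 1.
Proof. by rewrite /mxtrace big_ord2. Qed.

End Matrix2.

Section QubitAlgebra.
Context {R : realType}.
Local Notation C := (complex R).
Local Notation Re := complex.Re.
Local Notation Im := complex.Im.

Lemma hermitian2P (M : 'M[C]_2) :
  adj M = M <->
  [/\ Im (M 0 0) = 0, Im (M 1 1) = 0, Re (M 1 0) = Re (M 0 1) & Im (M 1 0) = - Im (M 0 1)].
Proof.
split=> [adjM | [i00 i11 r10 i10]].
  have E i j : M i j = conjc (M j i) by rewrite -{1}adjM !mxE.
  have Im_diag i : Im (M i i) = 0.
    by have := congr1 (@complex.Im R) (E i i); rewrite Im_conj; lra.
  by split; rewrite ?Im_diag // (E 1 0) ?Re_conj ?Im_conj.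
apply/matrixP; apply: ord2_ind; apply: ord2_ind; rewrite !mxE /=; apply: complex_ext;
  by rewrite ?Re_conj ?Im_conj ?i00 ?i11 ?r10 ?i10 ?oppr0 ?opprK.
Qed.

Lemma sigma_x_mx2 : sigma_x = mx2 0 1 1 0 :> 'M[C]_2.
Proof. by apply/matrixP; apply: ord2_ind; apply: ord2_ind; rewrite !mxE. Qed.
Lemma sigma_y_mx2 : sigma_y = mx2 0 (- iC) iC 0 :> 'M[C]_2.
Proof. by apply/matrixP; apply: ord2_ind; apply: ord2_ind; rewrite !mxE. Qed.
Lemma sigma_z_mx2 : sigma_z = mx2 1 0 0 (-1) :> 'M[C]_2.
Proof. by apply/matrixP; apply: ord2_ind; apply: ord2_ind; rewrite !mxE. Qed.

Lemma sigma_m_mx2 : sigma_m = mx2 0 0 1 0 :> 'M[C]_2.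
Proof.
rewrite /sigma_m sigma_x_mx2 sigma_y_mx2 !scalemx2 oppmx2 addmx2.
by apply: mx2_ext; rewrite !mxE; apply: complex_ext; rewrite /= ?mulr0 ?mul0r; lra.
Qed.

Lemma sigma_p_mx2 : sigma_p = mx2 0 1 0 0 :> 'M[C]_2.
Proof.
rewrite /sigma_p sigma_x_mx2 sigma_y_mx2 !scalemx2 addmx2.
by apply: mx2_ext; rewrite !mxE; apply: complex_ext; rewrite /= ?mulr0 ?mul0r; lra.
Qed.

Lemma Ham_mx2 (om ex ey : R -> R) (t : R) :
  Ham om ex ey t =
  let h := Complex (ex t / 2) (- (ey t / 2)) in
  mx2 (rc ((1 + om t) / 2)) h (conjc h) (- rc ((1 + om t) / 2)).
Proof.
rewrite /Ham /I_x /I_y /I_z sigma_x_mx2 sigma_y_mx2 sigma_z_mx2 !scalemx2 !addmx2.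
by apply: mx2_ext; rewrite !mxE /=; apply: complex_ext => /=; ring.
Qed.

Lemma lindblad_rhs_mx2 (w g : R) (h a b c d : C) :
  lindblad_rhs (mx2 (rc w) h (conjc h) (- rc w)) g (mx2 a b c d) =
  mx2 (- iC * (h * c - b * conjc h) - rc g * a)
      (- iC * (rc (2 * w) * b + h * (d - a)) - rc (g / 2) * b)
      (- iC * (conjc h * (a - d) - rc (2 * w) * c) - rc (g / 2) * c)
      (- iC * (conjc h * b - c * h) + rc g * a).
Proof.
rewrite /lindblad_rhs /comm sigma_m_mx2 sigma_p_mx2.
rewrite !mulmx2 !scalemx2 !oppmx2 !addmx2.
apply: mx2_ext; rewrite !mxE /=.
all: move: h a b c d => [? ?] [? ?] [? ?] [? ?] [? ?]; apply: complex_ext => /=.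
all: by field.
Qed.

Lemma lindblad_rhs_tr (H M : 'M[C]_2) (g : R) : \tr (lindblad_rhs H g M) = 0.
Proof.
rewrite /lindblad_rhs /comm mxtraceD !mxtraceZ !raddfB /= !mxtraceZ.
rewrite [\tr (H *m M)]mxtrace_mulC subrr mulr0 add0r.
rewrite mxtrace_mulC mulmxA -[M *m _ *m _]mulmxA mxtrace_mulC.
have half : rc (1 / 2) + rc (1 / 2) = 1 :> C by apply: complex_ext => /=; lra.
by rewrite -addrA -opprD -mulrDl half mul1r subrr mulr0.
Qed.

Lemma mel2 (v : 'cV[C]_2) (M : 'M[C]_2) :
  mel v M v = conjc (v 0 0) * (M 0 0 * v 0 0 + M 0 1 * v 1 0)
            + conjc (v 1 0) * (M 1 0 * v 0 0 + M 1 1 * v 1 0).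
Proof. by rewrite /mel /adj mxE !big_ord2 !mxE !big_ord2 !mxE; ring. Qed.

Lemma mel_ket0 (M : 'M[C]_2) : mel ket0 M ket0 = M 0 0.
Proof.
by rewrite mel2 !mxE /= (@conjc0 R : ((- 0)*i)%C = 0) (@conjc1 R : (1 -i* 0)%C = 1); ring.
Qed.

Lemma mel_ket1 (M : 'M[C]_2) : mel ket1 M ket1 = M 1 1.
Proof.
by rewrite mel2 !mxE /= (@conjc0 R : ((- 0)*i)%C = 0) (@conjc1 R : (1 -i* 0)%C = 1); ring.
Qed.

Lemma density_matrix_det_ge0 (M : 'M[C]_2) : density_matrix M ->
  Re (M 0 1) ^+ 2 + Im (M 0 1) ^+ 2 <= Re (M 0 0) * Re (M 1 1).
Proof.
move=> [/hermitian2P[i00 i11 r10 i10] [psd /(congr1 (@complex.Re R))]].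
(* On these two vectors the quadratic form is M_00 P and M_11 P, P the determinant. *)
have := psd (\col_i (if i == 0 :> nat then M 0 1 else - M 0 0)).
have := psd (\col_i (if i == 0 :> nat then M 1 1 else - M 1 0)).
rewrite mxtrace2 !mel2 !mxE /= !lecE /=.
move: i00 i11 r10 i10; case: (M 0 0) (M 0 1) (M 1 0) (M 1 1) => [a ?] [cr ci] [? ?] [b ?] /=.
move=> -> -> -> -> /andP[_ bP] /andP[_ aP] ab1.
have -> : a * b = (a + b) * (a * b) by rewrite ab1 mul1r.
rewrite !expr2; nra.
Qed.

End QubitAlgebra.

Section ExcitationRate.
Context {R : rcfType}.

Lemma excitation_rate_le (eps G g ex ey a b cr ci : R) : 0 < eps -> 0 <= g <= G ->
  ex ^+ 2 + ey ^+ 2 <= eps ^+ 2 -> cr ^+ 2 + ci ^+ 2 <= a * b -> a + b = 1 ->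
  ex * ci + ey * cr + g * a <= (Num.sqrt (4 * eps ^+ 2 + G ^+ 2) + G) / 2.
Proof.
move=> eps0 /andP[g0 gG] exy cab ab1.
set S := Num.sqrt _; set r := (S + G) / 2; set X := ex * ci + ey * cr.
have S0 : 0 <= S := sqrtr_ge0 _.
have S2 : S ^+ 2 = 4 * eps ^+ 2 + G ^+ 2.
  by rewrite /S sqr_sqrtr //; have := sqr_ge0 eps; have := sqr_ge0 G; lra.
have r2 : r ^+ 2 = eps ^+ 2 + G * r by rewrite /r; rewrite !expr2 in S2 *; lra.
have r0 : 0 < r.
  have : 0 < S by rewrite /S sqrtr_gt0; have := sqr_ge0 G; have := exprn_gt0 2 eps0; lra.
  by rewrite /r; lra.
have [a0 b0] : 0 <= a /\ 0 <= b.
  have ab0 : 0 <= a * b by apply: le_trans cab; rewrite addr_ge0 ?sqr_ge0.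
  by split; rewrite leNgt; apply/negP => ?; move: ab0; rewrite leNgt; apply/negP; nra.
have X2 : X ^+ 2 <= eps ^+ 2 * (a * b).
  have : 0 <= (ex * cr - ey * ci) ^+ 2 by exact: sqr_ge0.
  have := ler_wpM2r (addr_ge0 (sqr_ge0 cr) (sqr_ge0 ci)) exy.
  have := ler_wpM2l (sqr_ge0 eps) cab.
  rewrite /X !expr2; nra.
(* [r] is the positive root of r^2 = eps^2 + G r, and [rX] (AM-GM) turns into
   r (X + G a) <= r^2 b + (eps^2 + G r) a = r^2. *)
have rX : r * X <= r ^+ 2 * b + eps ^+ 2 * a.
  have Y0 : 0 <= r ^+ 2 * b + eps ^+ 2 * a.
    by have := mulr_ge0 (sqr_ge0 r) b0; have := mulr_ge0 (sqr_ge0 eps) a0; lra.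
  have rX2 : (r * X) ^+ 2 <= (r ^+ 2 * b + eps ^+ 2 * a) ^+ 2.
    have := ler_wpM2l (sqr_ge0 r) X2; have := sqr_ge0 (r ^+ 2 * b - eps ^+ 2 * a).
    have := mulr_ge0 (mulr_ge0 (sqr_ge0 r) (sqr_ge0 eps)) (mulr_ge0 a0 b0).
    rewrite !expr2; lra.
  rewrite leNgt; apply/negP => Ylt; move: rX2; rewrite !expr2; nra.
have ga : g * a <= G * a by rewrite ler_wpM2r.
suff : r * (X + G * a) <= r * r by rewrite ler_pM2l //; lra.
have rr : r * r = r ^+ 2 * b + (eps ^+ 2 + G * r) * a.
  by rewrite -r2 -mulrDr addrC ab1 mulr1 expr2.
by rewrite rr; lra.
Qed.

End ExcitationRate.

Section DerivativeComparison.
Context {R : realType}.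
Implicit Types (f : R -> R) (a b : R).

Lemma derive_ge0_le {f a b} : f @ a^'+ --> f a -> a <= b ->
  (forall s, a < s <= b -> exists2 d, is_derive s 1 f d & 0 <= d) -> f a <= f b.
Proof.
move=> fa; rewrite le_eqVlt => /predU1P[<- //|ab] df.
have f_derivable s : a < s <= b -> derivable f s 1 by case/df => d [].
apply: (cvgr_to_le fa); near=> s.
have a_s : a < s by near: s; exact: nbhs_right_gt.
have s_b : s < b by near: s; exact: nbhs_right_lt.
have in_ab x : s <= x <= b -> a < x <= b.
  by case/andP=> sx ->; rewrite (lt_le_trans a_s sx).
apply: (@ger0_derive1_le_cc _ f s b).
- by move=> x; rewrite in_itv /= => /andP[sx xb]; apply: f_derivable; apply: in_ab; rewrite !ltW.
- move=> x; rewrite in_itv /= => /andP[sx xb].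
  have [|d fd d0] := df x; first by apply: in_ab; rewrite !ltW.
  by rewrite derive1E derive_val.
- apply: derivable_within_continuous => x; rewrite in_itv /= => xsb.
  exact/f_derivable/in_ab.
- by rewrite in_itv /= lexx ltW.
- by rewrite in_itv /= lexx ltW.
- exact: ltW.
Unshelve. all: end_near.
Qed.

Lemma derive_le0_ge {f a b} : f @ a^'+ --> f a -> a <= b ->
  (forall s, a < s <= b -> exists2 d, is_derive s 1 f d & d <= 0) -> f b <= f a.
Proof.
move=> fa ab df; have := @derive_ge0_le (- f) a b (cvgN fa) ab; rewrite !fctE lerN2.
apply=> s /df[d fd d0].
by exists (- d); [exact: is_deriveN | rewrite oppr_ge0].
Qed.

Lemma derive0_eq {f a b} : f @ a^'+ --> f a -> a <= b ->
  (forall s, a < s <= b -> is_derive s 1 f 0) -> f b = f a.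
Proof.
move=> fa ab df; apply/eqP; rewrite eq_le.
by rewrite (derive_le0_ge fa) ?(derive_ge0_le fa) // => s /df fd; exists 0.
Qed.

Lemma nonneg_barrier {f a b} : f @ a^'+ --> f a -> 0 <= f a -> a <= b ->
  (forall s, a < s <= b -> exists2 d, is_derive s 1 f d & (f s < 0 -> 0 <= d)) ->
  0 <= f b.
Proof.
move=> fa fa0 ab df; rewrite leNgt; apply/negP => fb0.
have f_cvg s : a < s <= b -> f @ s --> f s.
  by case/df=> d [fd _] _; apply/differentiable_continuous/derivable1_diffP.
pose S := [set s | a <= s <= b /\ 0 <= f s].
have hS : has_sup S.
  by split; [exists a; rewrite /S /= lexx ab | exists b => s [/andP[_]]].
pose m := sup S.
have am : a <= m by apply: sup_upper_bound => //; rewrite /S /= lexx ab.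
have mb : m <= b by apply: ge_sup; [case: hS | move=> s [/andP[_]]].
have fm0 : 0 <= f m.
  move: am; rewrite le_eqVlt => /predU1P[am|am]; first by rewrite -am.
  rewrite leNgt; apply/negP => fm.
  have /cvgr_lt/(_ 0 fm)/nbhs_ballP[e e0 fneg] := f_cvg m (introT andP (conj am mb)).
  have [s Ss ms] := sup_adherent e0 hS.
  have sm : s <= m by apply: sup_upper_bound.
  case: Ss => _; rewrite leNgt fneg //= /ball /= ger0_norm ?subr_ge0 //.
  by rewrite ltrBlDr addrC -ltrBlDr.
have fneg s : m < s <= b -> f s < 0.
  case/andP=> ms sb; rewrite ltNge; apply/negP => fs0.
  have : s <= m by apply: sup_upper_bound => //; rewrite /S /= sb (le_trans am (ltW ms)).
  by rewrite leNgt ms.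
have fm : f @ m^'+ --> f m.
  move: am; rewrite le_eqVlt => /predU1P[<- //|am].
  by apply: cvg_at_right_filter; apply: f_cvg; rewrite am mb.
have : f m <= f b.
  apply: (derive_ge0_le fm mb) => s /andP[ms sb].
  have [|d fd d0] := df s; first by rewrite sb (le_lt_trans am ms).
  by exists d => //; apply/d0/fneg; rewrite ms sb.
by rewrite leNgt (lt_le_trans fb0 fm0).
Qed.
End DerivativeComparison.

Section LindbladFlow.
Context {R : realType}.
Local Notation C := (complex R).
Local Notation Re := complex.Re.
Local Notation Im := complex.Im.

Context {om ex ey dg : R -> R} {gamma0 : R} {rho : R -> 'M[C]_2}.
Let g s := gamma0 + dg s.
Let L s := lindblad_rhs (Ham om ex ey s) (g s) (rho s).
Hypothesis rho_cvg0 : mx_right_cont0 rho.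
Hypothesis rho_derive : forall s, 0 < s -> mx_has_deriv rho s (L s).

Let re i j s := Re (rho s i j).
Let im i j s := Im (rho s i j).

Let re_cvg0 (i j : 'I_2) : re i j @ 0^'+ --> re i j 0. Proof. by case: (rho_cvg0 i j). Qed.
Let im_cvg0 (i j : 'I_2) : im i j @ 0^'+ --> im i j 0. Proof. by case: (rho_cvg0 i j). Qed.
Let re_derive (i j : 'I_2) {s : R} : 0 < s -> is_derive s 1 (re i j) (Re (L s i j)).
Proof. by move=> s0; case: (rho_derive s s0 i j). Qed.
Let im_derive (i j : 'I_2) {s : R} : 0 < s -> is_derive s 1 (im i j) (Im (L s i j)).
Proof. by move=> s0; case: (rho_derive s s0 i j). Qed.

Lemma tr_rho t : 0 <= t -> \tr (rho t) = \tr (rho 0).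
Proof.
move=> t0; rewrite !mxtrace2.
have dtr s : L s 0 0 + L s 1 1 = 0.
  by rewrite -mxtrace2; apply: lindblad_rhs_tr.
apply: complex_ext; rewrite ?Re_add ?Im_add.
- have := derive0_eq (cvgD (re_cvg0 0 0) (re_cvg0 1 1)) t0; apply.
  move=> s /andP[s0 _].
  apply: (is_derive_eq (is_deriveD (re_derive 0 0 s0) (re_derive 1 1 s0))).
  by rewrite -Re_add dtr.
- have := derive0_eq (cvgD (im_cvg0 0 0) (im_cvg0 1 1)) t0; apply.
  move=> s /andP[s0 _].
  apply: (is_derive_eq (is_deriveD (im_derive 0 0 s0) (im_derive 1 1 s0))).
  by rewrite -Im_add dtr.
Qed.

Hypothesis g_ge0 : forall s, 0 <= g s.

Ltac expand_rhs s :=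
  rewrite /L /re /im ?fctE -?[_ *: _]/(_ * _) (Ham_mx2 om ex ey s) [rho s]mx2_eta;
  rewrite lindblad_rhs_mx2 !mxE /=;
  case: (rho s 0 0) (rho s 0 1) (rho s 1 0) (rho s 1 1) => [ar ai] [br bi] [cr ci] [dr di] /=.

Lemma rho_hermitian : adj (rho 0) = rho 0 -> forall t, 0 <= t -> adj (rho t) = rho t.
Proof.
move=> /hermitian2P[i00 i11 r10 i10] t t0.
have im_tr (s : R) : 0 <= s -> im 0 0 s = - im 1 1 s.
  by move=> s0; have := congr1 (@complex.Im R) (tr_rho s s0); rewrite !mxtrace2 !Im_add i00 i11; lra.
pose u1 : R -> R := re 1 0 - re 0 1.
pose u2 : R -> R := im 1 0 + im 0 1.
pose w : R -> R := im 1 1 + im 1 1.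
(* With the weight 2 in [w] the Hamiltonian terms cancel in V'. *)
pose V : R -> R := u1 * u1 + u2 * u2 + w * w.
have dV (s : R) : 0 < s -> exists2 d : R, is_derive s 1 V d & d <= 0.
  move=> s0; have du1 := is_deriveB (re_derive 1 0 s0) (re_derive 0 1 s0).
  have du2 := is_deriveD (im_derive 1 0 s0) (im_derive 0 1 s0).
  have dw := is_deriveD (im_derive 1 1 s0) (im_derive 1 1 s0).
  eexists; first exact: is_deriveD (is_deriveD (is_deriveM du1 du1) (is_deriveM du2 du2))
                                   (is_deriveM dw dw).
  move: (im_tr s (ltW s0)) (g_ge0 s); rewrite /u1 /u2 /w.
  expand_rhs s => -> gs.
  have sq_ge0 : 0 <= (cr - br) ^+ 2 + (ci + bi) ^+ 2 + 8 * di ^+ 2.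
    by have := sqr_ge0 (cr - br); have := sqr_ge0 (ci + bi); have := sqr_ge0 di; lra.
  have := mulr_ge0 gs sq_ge0; rewrite !expr2; lra.
have V_cvg0 : V @ 0^'+ --> V 0.
  have u1_cvg0 : u1 @ 0^'+ --> u1 0 by apply: cvgB; apply: re_cvg0.
  have u2_cvg0 : u2 @ 0^'+ --> u2 0 by apply: cvgD; apply: im_cvg0.
  have w_cvg0 : w @ 0^'+ --> w 0 by apply: cvgD; apply: im_cvg0.
  by apply: cvgD; [apply: cvgD|]; apply: cvgM.
have V0 : V 0 = 0 by rewrite /V /u1 /u2 /w !fctE /re /im r10 i10 i11; ring.
have Vt : V t <= 0 by rewrite -V0; apply: (derive_le0_ge V_cvg0 t0) => s /andP[s0 _]; apply: dV.
have sq0 (x y z : R) : x * x + y * y + z * z <= 0 -> [/\ x = 0, y = 0 & z = 0].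
  move=> xyz; have := sqr_ge0 x; have := sqr_ge0 y; have := sqr_ge0 z.
  by split; apply/eqP; rewrite -sqrf_eq0 eq_le sqr_ge0 andbT; rewrite !expr2 in xyz *; lra.
have [] := sq0 _ _ _ Vt; have := im_tr t t0.
rewrite /u1 /u2 /w !fctE /re /im => i00t r10t i10t i11t.
by apply/hermitian2P; split; lra.
Qed.

Lemma rho_det_ge0 : density_matrix (rho 0) -> forall t, 0 <= t ->
  Re (rho t 0 1) ^+ 2 + Im (rho t 0 1) ^+ 2 <= Re (rho t 0 0) * Re (rho t 1 1).
Proof.
move=> rho0 t t0.
have herm s : 0 <= s -> adj (rho s) = rho s by apply: rho_hermitian; case: rho0.
pose P : R -> R := re 0 0 * re 1 1 - (re 0 1 * re 0 1 + im 0 1 * im 0 1).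
have P_cvg0 : P @ 0^'+ --> P 0.
  by apply: cvgB; [apply: cvgM | apply: cvgD; apply: cvgM]; apply: re_cvg0 || apply: im_cvg0.
have P0 : 0 <= P 0.
  by have := density_matrix_det_ge0 _ rho0; rewrite /P !fctE /re /im !expr2; lra.
have dP (s : R) : 0 < s <= t -> exists2 d : R, is_derive s 1 P d & (P s < 0 -> 0 <= d).
  move=> /andP[s0 _]; eexists.
    apply: is_deriveB; first exact: is_deriveM (re_derive 0 0 s0) (re_derive 1 1 s0).
    exact: is_deriveD (is_deriveM (re_derive 0 1 s0) (re_derive 0 1 s0))
                      (is_deriveM (im_derive 0 1 s0) (im_derive 0 1 s0)).
  (* once rho is Hermitian, P' = g (Re rho_00 ^ 2 - P) *)
  move: (herm s (ltW s0)) (g_ge0 s) => /hermitian2P[].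
  rewrite /P; expand_rhs s => -> -> -> -> gs; rewrite -oppr_gt0 => Pneg.
  have := mulr_ge0 gs (sqr_ge0 ar).
  have := mulr_ge0 gs (ltW Pneg).
  rewrite !expr2; lra.
have := nonneg_barrier P_cvg0 P0 t0 dP.
by rewrite /P !fctE /re /im !expr2; lra.
Qed.

Lemma rho11_le (eps G : R) : 0 < eps -> (forall s, g s <= G) ->
  (forall s, ex s ^+ 2 + ey s ^+ 2 <= eps ^+ 2) -> density_matrix (rho 0) ->
  forall t, 0 <= t ->
  Re (rho t 1 1) <= Re (rho 0 1 1) + (Num.sqrt (4 * eps ^+ 2 + G ^+ 2) + G) / 2 * t.
Proof.
move=> eps0 gG exy rho0 t t0.
set r := (_ + G) / 2.
have re_tr (s : R) : 0 <= s -> re 0 0 s + re 1 1 s = 1.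
  move=> s0; have := congr1 (@complex.Re R) (tr_rho s s0).
  by rewrite rho0.2.2 mxtrace2 Re_add.
pose Q : R -> R := re 1 1 - r *: id.
have Q_cvg0 : Q @ 0^'+ --> Q 0.
  apply: cvgB; first exact: re_cvg0.
  by apply: cvgZr; apply: cvg_at_right_filter; apply: cvg_id.
have dQ (s : R) : 0 < s <= t -> exists2 d : R, is_derive s 1 Q d & d <= 0.
  move=> /andP[s0 _]; eexists.
    exact: is_deriveB (re_derive 1 1 s0) (is_deriveZ r (is_derive_id s 1)).
  have /hermitian2P := rho_hermitian (proj1 rho0) s (ltW s0).
  move: (rho_det_ge0 rho0 s (ltW s0)) (re_tr s (ltW s0)).
  expand_rhs s => det tr [_ _ -> ->].
  have := @excitation_rate_le _ eps G (g s) (ex s) (ey s) ar dr br bi eps0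
    (introT andP (conj (g_ge0 s) (gG s))) (exy s) det tr.
  rewrite /r; lra.
have := derive_le0_ge Q_cvg0 t0 dQ.
by rewrite /Q !fctE /re -![_ *: _]/(_ * _); lra.
Qed.

End LindbladFlow.

Theorem theorem3 (R : realType) (p0 beta alpha eps omega gamma0 gamma : R)
  (om ex ey dg : R -> R) (rho : R -> 'M[complex R]_2) :
  0 < p0 < 1 -> 0 < beta <= 1 -> 0 <= alpha <= 1 -> alpha <= beta ->
  0 < eps -> 0 <= omega -> 0 <= gamma <= gamma0 ->
  (forall t, `|om t| <= omega) ->
  (forall t, Num.sqrt (ex t ^+ 2 + ey t ^+ 2) <= eps) ->
  (forall t, `|dg t| <= gamma) ->
  density_matrix (rho 0) ->
  mel ket1 (rho 0) ket1 <= rc (alpha * p0) ->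
  mx_right_cont0 rho ->
  (forall t, 0 < t ->
     mx_has_deriv rho t (lindblad_rhs (Ham om ex ey t) (gamma0 + dg t) (rho t))) ->
  forall t, 0 <= t <= (1 - beta) * T_a p0 eps gamma0 gamma ->
    in_Da p0 (rho t) /\ fail_prob (rho t) <= rc p0.
Proof.
move=> /andP[p0_gt0 _] /andP[_ beta_le1] /andP[alpha_ge0 _] alpha_le_beta eps_gt0 _
  /andP[gamma_ge0 gamma_le] _ exy_le dg_le rho0 fail0 rho_cvg0 rho_derive t /andP[t0 tT].
have g_ge0 s : 0 <= gamma0 + dg s by have := dg_le s; rewrite ler_norml; lra.
have g_le s : gamma0 + dg s <= gamma0 + gamma by have := dg_le s; rewrite ler_norml; lra.
have exy s : ex s ^+ 2 + ey s ^+ 2 <= eps ^+ 2.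
  by rewrite -ler_sqrt ?sqr_ge0 // sqrtr_sqr ger0_norm ?exy_le ?ltW.
have /hermitian2P[_ im11 _ _] := rho_hermitian rho_cvg0 rho_derive g_ge0 rho0.1 t t0.
have := congr1 (@complex.Im R) (tr_rho rho_cvg0 rho_derive t t0).
have := congr1 (@complex.Re R) (tr_rho rho_cvg0 rho_derive t t0).
rewrite rho0.2.2 !mxtrace2 !Re_add !Im_add /= im11 => re_tr im_tr.
have rate := rho11_le rho_cvg0 rho_derive g_ge0 _ _ eps_gt0 g_le exy rho0 t t0.
set r := (_ + _) / 2 in rate.
have S_gt0 : 0 < Num.sqrt (4 * eps ^+ 2 + (gamma0 + gamma) ^+ 2).
  by rewrite sqrtr_gt0; have := sqr_ge0 (gamma0 + gamma); have := exprn_gt0 2 eps_gt0; lra.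
have r_Ta : r * T_a p0 eps gamma0 gamma = p0.
  by rewrite /r /T_a; field; rewrite gt_eqF //; lra.
have r_ge0 : 0 <= r by rewrite /r; lra.
have fail_t : complex.Re (rho t 1 1) <= p0.
  have := ler_wpM2l r_ge0 tT; rewrite mulrCA r_Ta.
  move: fail0; rewrite mel_ket1 lecE /= => /andP[_ fail0].
  have : alpha * p0 <= beta * p0 by rewrite ler_wpM2r // ltW.
  lra.
rewrite /in_Da /fail_prob mel_ket0 mel_ket1 !lecE /= im11 eqxx /=.
by split=> //; apply/andP; split; [apply/eqP |]; lra.
Qed.
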